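(* Let $\mathbb{H}$ be a finite set and $\mathcal{H}=(H_e)_{e\in E(\mathbb{Z}^d)}$ a collection of subsets of $\mathbb{H}^2$. Let $S\subset\mathbb{Z}^d$ be finite and even, let $\{\mathbb{H}_u\}_{u\in\partial_\bullet S}$ be subsets of $\mathbb{H}$, and let $\mathcal{F}\subset\mathrm{Hom}_{S,\mathcal{H}}$ be such that $F(u)\in\mathbb{H}_u$ for every $F\in\mathcal{F}$ and $u\in\partial_\bullet S$. Let $F$ be a uniformly random element of $\mathcal{F}$, and for each odd $v\in S$ let $X_v$ be a random variable measurable with respect to $F|_{N(v)}$. Then \[ |\mathcal{F}|\le\prod_{v\in S\text{ odd}}\ \prod_x\left(\frac{Z^{\mathcal{H}}_v(\Psi_{v,x},I_{v,x})}{\mathbb{P}(X_v=x)}\right)^{\mathbb{P}(X_v=x)/2d}\cdot\prod_{u\in\partial_\bullet S}|\mathbb{H}_u|^{\frac1{2d}|\partial u\cap\partial S|}, \] where the inner product is over $x$ in the support of $X_v$, and $\Psi_{v,x}$, $I_{v,x}$ are the supports of $F|_{N(v)}$ and $F(v)$ on the event $\{X_v=x\}$.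
   Context: $\mathbb{Z}^d$ with nearest-neighbour edges $E(\mathbb{Z}^d)$; even/odd vertices by parity of coordinate sum; $N(v)$ the neighbours of $v$; $\partial_\bullet S$ the vertices of $S$ with a neighbour outside $S$; $S$ is even if $\partial_\bullet S$ consists only of even vertices; $\partial u$ the edges incident to $u$; $\partial S$ the edges with exactly one endpoint in $S$. $\mathrm{Hom}_{S,\mathcal{H}}$ is the set of $F:S\to\mathbb{H}$ with $(F(v),F(u))\in H_{\{v,u\}}$ whenever $v\in S$ is odd and $u\sim v$. For an edge $e$ and $h\in\mathbb{H}$, $H_{e,h}=\{h'\in\mathbb{H}:(h',h)\in H_e\}$; for odd $v$ and $\psi:N(v)\to\mathbb{H}$, $H_{v,\psi}=\bigcap_{u\sim v}H_{\{v,u\},\psi(u)}$; for a set $\Psi$ of such $\psi$ and $I\subset\mathbb{H}$, $Z^{\mathcal{H}}_v(\Psi,I)=\sum_{\psi\in\Psi}|H_{v,\psi}\cap I|^{2d}$. *)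

From HB Require Import structures.
From mathcomp Require Import all_boot all_order all_algebra.
From mathcomp Require Import finmap.
From mathcomp Require Import reals exp.
Set Implicit Arguments.
Unset Strict Implicit.
Unset Printing Implicit Defensive.
Import Order.TTheory GRing.Theory Num.Theory.
Local Open Scope fset_scope.

Definition pt (d : nat) := {ffun 'I_d -> int}.

Definition odd_pt d (v : pt d) : bool := odd (absz (\sum_(i < d) v i)%R).

Definition shift d (v : pt d) (i : 'I_d) (s : int) : pt d :=
  [ffun j => if j == i then (v j + s)%R else v j].

Definition nbrs d (v : pt d) : seq (pt d) :=
  [seq shift v i 1%R | i <- enum 'I_d] ++ [seq shift v i (-1)%R | i <- enum 'I_d].

Definition ibd d (S : {fset pt d}) (u : pt d) : bool :=
  (u \in S) && has (fun w => w \notin S) (nbrs u).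

Definition even_set d (S : {fset pt d}) : Prop :=
  forall u, ibd S u -> ~~ odd_pt u.

(* |∂u ∩ ∂S| : number of edges from u leaving S *)
Definition nout d (S : {fset pt d}) (u : pt d) : nat :=
  count (fun w => w \notin S) (nbrs u).

(* Hom_{S,H}: Hc v u is H_{v,u} (symmetric in the edge) *)
Definition is_hom d (H : finType) (S : {fset pt d})
  (Hc : pt d -> pt d -> {set H * H}) (F : {ffun S -> H}) : Prop :=
  forall v u : S, odd_pt (val v) -> val u \in nbrs (val v) ->
    (F v, F u) \in Hc (val v) (val u).

(* F|_{N(v)}, encoded as a partial function on S *)
Definition restrN d (H : finType) (S : {fset pt d}) (v : pt d)
  (F : {ffun S -> H}) : {ffun S -> option H} :=
  [ffun u => if val u \in nbrs v then Some (F u) else None].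

Definition Hvpsi d (H : finType) (S : {fset pt d})
  (Hc : pt d -> pt d -> {set H * H}) (v : pt d) (psi : {ffun S -> option H})
  : {set H} :=
  [set h | [forall u : S, if psi u is Some a then (h, a) \in Hc v (val u)
                          else true]].

Definition Zv (R : realType) d (H : finType) (S : {fset pt d})
  (Hc : pt d -> pt d -> {set H * H}) (v : pt d)
  (Psi : seq {ffun S -> option H}) (I : {set H}) : R :=
  (\sum_(psi <- Psi) (#|Hvpsi Hc v psi :&: I| ^ (2 * d))%:R)%R.

Definition event d (H : finType) (S : {fset pt d}) (T : eqType)
  (Fam : {set {ffun S -> H}}) (X : {ffun S -> H} -> T) (x : T)
  : {set {ffun S -> H}} := [set F in Fam | X F == x].

Definition prob (R : realType) d (H : finType) (S : {fset pt d}) (T : eqType)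
  (Fam : {set {ffun S -> H}}) (X : {ffun S -> H} -> T) (x : T) : R :=
  (#|event Fam X x|%:R / #|Fam|%:R)%R.

Definition supp d (H : finType) (S : {fset pt d}) (T : eqType)
  (Fam : {set {ffun S -> H}}) (X : {ffun S -> H} -> T) : seq T :=
  undup [seq X F | F <- enum Fam].

Definition Psi d (H : finType) (S : {fset pt d}) (T : eqType)
  (Fam : {set {ffun S -> H}}) (X : {ffun S -> H} -> T) (v : pt d) (x : T)
  : seq {ffun S -> option H} :=
  undup [seq restrN v F | F <- enum (event Fam X x)].

Definition Ivx d (H : finType) (S : {fset pt d}) (T : eqType)
  (Fam : {set {ffun S -> H}}) (X : {ffun S -> H} -> T) (v : S) (x : T)
  : {set H} := [set (F : {ffun S -> H}) v | F in event Fam X x].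

(* For F uniform on Fam and a set W of sites, let h(W) be the entropy of F|_W;
   h is monotone and submodular.  Neighbourhoods of odd sites consist of even
   sites, so the chain rule gives
     ln |Fam| = h(S) <= h(even) + sum_(v odd) (h(v + N v) - h(N v)),
   and Shearer's inequality, each even site being covered 2d times by the
   neighbourhoods N v of its odd neighbours and by its edges leaving S, gives
     2d h(even) <= sum_(v odd) h(N v) + sum_u |du /\ dS| h(u).
   Finally h(u) <= ln |H_u|, and for odd v Gibbs' inequality bounds
     2d (h(v + N v) - h(N v)) + h(N v)
   by sum_x P(X_v = x) ln (Z_v(Psi_(v,x), I_(v,x)) / P(X_v = x)), because given
   F|_(N v) = psi and X_v = x the value F(v) ranges over H_(v,psi) /\ I_(v,x). *)

From HB Require Import structures.
From mathcomp Require Import all_boot all_order all_algebra.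
From mathcomp Require Import finmap.
From mathcomp Require Import reals exp sequences.
From mathcomp Require Import lra zify.
Import Order.TTheory GRing.Theory Num.Theory.

Set Implicit Arguments.
Unset Strict Implicit.
Unset Printing Implicit Defensive.

Local Open Scope ring_scope.

Section Fibers.
Variables (O : finType) (B : eqType) (A : {set O}) (f : O -> B).

Definition fiber_card (w : O) : nat := #|[set w' in A | f w' == f w]|.

Lemma fiber_card_gt0 w : w \in A -> (0 < fiber_card w)%N.
Proof. by move=> wA; apply/card_gt0P; exists w; rewrite inE wA eqxx. Qed.

Lemma fiber_card_eq w w' : f w = f w' -> fiber_card w = fiber_card w'.
Proof. by rewrite /fiber_card => ->. Qed.

Variable R : numFieldType.

Lemma natr_fiber_card_gt0 w : w \in A -> 0 < (fiber_card w)%:R :> R.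
Proof. by move=> wA; rewrite ltr0n fiber_card_gt0. Qed.

Lemma natr_fiber_cardE w :
  (fiber_card w)%:R = \sum_(w' in A) (f w' == f w)%:R :> R.
Proof.
rewrite /fiber_card -sum1_card natr_sum big_mkcond [RHS]big_mkcond /=.
by apply: eq_bigr => w' _; rewrite inE; case: (w' \in A); case: (f w' == f w).
Qed.

Lemma sum_fiber_card_mul (h : O -> R) :
  \sum_(w in A) (fiber_card w)%:R * h w =
  \sum_(w1 in A) \sum_(w in A | f w == f w1) h w.
Proof.
under eq_bigr do rewrite natr_fiber_cardE mulr_suml.
rewrite exchange_big /=; apply: eq_bigr => w1 _.
rewrite big_mkcondr /=; apply: eq_bigr => w _.
by rewrite eq_sym; case: (f w == f w1); rewrite ?mul1r ?mul0r.
Qed.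

Lemma big_fibers (K : O -> R) :
  \sum_(w in A) K w =
  \sum_(b <- undup [seq f w | w <- enum A]) \sum_(w in A | f w == b) K w.
Proof.
symmetry; rewrite -(exchange_big_dep xpredT) //=.
apply: eq_bigr => w wA; rewrite -big_filter.
have fw_img : f w \in undup [seq f w' | w' <- enum A].
  by rewrite mem_undup; apply: map_f; rewrite mem_enum.
have -> : [seq b <- undup [seq f w' | w' <- enum A] | f w == b] = [:: f w].
  rewrite -(filter_pred1_uniq (undup_uniq _) fw_img).
  by apply: eq_filter => b /=; rewrite eq_sym.
by rewrite big_seq1.
Qed.

Lemma sum_div_fiber_card (G : B -> R) :
  \sum_(w in A) G (f w) / (fiber_card w)%:R =
  \sum_(b <- undup [seq f w | w <- enum A]) G b.
Proof.
rewrite (big_fibers (fun w => G (f w) / _)) big_seq [RHS]big_seq.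
apply: eq_bigr => b; rewrite mem_undup => /mapP[w0]; rewrite mem_enum => w0A ->.
rewrite (eq_bigr (fun=> G (f w0) / (fiber_card w0)%:R)); last first.
  by move=> w /andP[_ /eqP fw]; rewrite fw (fiber_card_eq fw).
rewrite (eq_bigl (fun w => w \in [set w' in A | f w' == f w0])); last first.
  by move=> w; rewrite inE.
rewrite sumr_const -[_ *+ _]mulr_natr divfK //.
by rewrite pnatr_eq0 -lt0n fiber_card_gt0.
Qed.

Lemma sum_inv_fiber_card :
  \sum_(w in A) (fiber_card w)%:R^-1 = (size (undup [seq f w | w <- enum A]))%:R :> R.
Proof.
under eq_bigr do rewrite -[_^-1]div1r.
by rewrite (sum_div_fiber_card (fun=> 1)) -sum1_size natr_sum.
Qed.
End Fibers.

Lemma ln_le_subr1 (R : realType) (x : R) : 0 < x -> ln x <= x - 1.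
Proof.
by move=> x_gt0; have := @le_ln1Dx R (x - 1); rewrite [1 + _]addrC subrK; apply; lra.
Qed.

Lemma gibbs (R : realType) (O : finType) (A : {set O}) (a b : O -> R) :
  (forall w, w \in A -> 0 < a w) -> (forall w, w \in A -> 0 < b w) ->
  \sum_(w in A) a w / b w <= #|A|%:R ->
  \sum_(w in A) ln (a w) <= \sum_(w in A) ln (b w).
Proof.
move=> a_gt0 b_gt0 sum_le; rewrite -subr_le0 -sumrB.
apply: le_trans (_ : \sum_(w in A) (a w / b w - 1) <= 0).
  apply: ler_sum => w wA; rewrite -ln_div ?posrE ?a_gt0 ?b_gt0 //.
  by apply: ln_le_subr1; rewrite divr_gt0 ?a_gt0 ?b_gt0.
by rewrite sumrB subr_le0 sumr_const.
Qed.

Lemma sum_lnM (R : realType) (O : finType) (A : {set O}) (a b : O -> R) :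
  (forall w, w \in A -> 0 < a w) -> (forall w, w \in A -> 0 < b w) ->
  \sum_(w in A) ln (a w * b w) = \sum_(w in A) ln (a w) + \sum_(w in A) ln (b w).
Proof.
move=> a_gt0 b_gt0; rewrite -big_split; apply: eq_bigr => w wA.
by rewrite lnM ?posrE ?a_gt0 ?b_gt0.
Qed.

Section Restriction.
Variables (I H : finType).
Implicit Types (W X Y : {set I}) (F : {ffun I -> H}).

Definition restr (W : {set I}) (F : {ffun I -> H}) : {ffun I -> option H} :=
  [ffun u => if u \in W then Some (F u) else None].

Lemma restr_eqP W F1 F2 : reflect {in W, F1 =1 F2} (restr W F1 == restr W F2).
Proof.
apply: (iffP eqP) => [eqW u uW | eqW].
  by move/ffunP/(_ u): eqW; rewrite !ffunE uW => -[].
by apply/ffunP => u; rewrite !ffunE; case: ifP => // uW; rewrite eqW.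
Qed.

Lemma restr_subset X Y F1 F2 :
  X \subset Y -> restr Y F1 == restr Y F2 -> restr X F1 == restr X F2.
Proof. by move=> /subsetP XY /restr_eqP eqY; apply/restr_eqP => u /XY /eqY. Qed.

Lemma restr_setU X Y F1 F2 :
  (restr (X :|: Y) F1 == restr (X :|: Y) F2) =
  (restr X F1 == restr X F2) && (restr Y F1 == restr Y F2).
Proof.
apply/idP/andP => [eqXY | [/restr_eqP eqX /restr_eqP eqY]].
  by split; apply: restr_subset eqXY; rewrite ?subsetUl ?subsetUr.
by apply/restr_eqP => u; rewrite inE => /orP[/eqX | /eqY].
Qed.

Lemma restr_set1 u F1 F2 : (restr [set u] F1 == restr [set u] F2) = (F1 u == F2 u).
Proof.
apply/restr_eqP/eqP => [eq_u | eq_u w]; first by apply: eq_u; rewrite inE.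
by rewrite inE => /eqP ->.
Qed.

Lemma restr_set0 F1 F2 : restr set0 F1 == restr set0 F2.
Proof. by apply/restr_eqP => u; rewrite inE. Qed.

Lemma restr_setT F1 F2 : (restr setT F1 == restr setT F2) = (F1 == F2).
Proof.
by apply/restr_eqP/eqP => [eqT | -> //]; apply/ffunP => u; apply: eqT; rewrite inE.
Qed.

End Restriction.

Definition submodular (R : numDomainType) (I : finType) (g : {set I} -> R) :=
  forall X Y, g (X :|: Y) + g (X :&: Y) <= g X + g Y.

Section SubmodularFunctions.
Variables (R : realFieldType) (I : finType) (g : {set I} -> R).
Hypothesis g_submod : submodular g.

Lemma submodular_marginal (A E : {set I}) (e : I) :
  e \in A -> A \subset E -> g E - g (E :\ e) <= g A - g (A :\ e).
Proof.
move=> eA /subsetP AE; have := g_submod A (E :\ e).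
have -> : A :|: (E :\ e) = E.
  apply/setP => x; rewrite !inE; case: (x =P e) => [-> | _]; first by rewrite eA (AE e eA).
  by case xA: (x \in A) => //=; rewrite AE.
have -> : A :&: (E :\ e) = A :\ e.
  by apply/setP => x; rewrite !inE andbCA (andb_idr (AE x)).
lra.
Qed.

Lemma submodular_chain (E B : {set I}) (nb : I -> {set I}) :
  [disjoint E & B] -> (forall v, v \in B -> nb v \subset E) ->
  g (E :|: B) <= g E + \sum_(v in B) (g (v |: nb v) - g (nb v)).
Proof.
elim: {B}_.+1 {-2}B (ltnSn #|B|) => // n IH B; rewrite ltnS => cardB disjEB nbE.
have [-> | [v vB]] := set_0Vmem B; first by rewrite setU0 big_set0 addr0.
have vE : v \notin E by rewrite (disjointFl disjEB vB).
have nbvE := nbE v vB.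
have v_nb : v \notin nb v by apply: contra vE; apply: (subsetP nbvE).
have IHv : g (E :|: (B :\ v)) <= g E + \sum_(u in B :\ v) (g (u |: nb u) - g (nb u)).
  apply: IH; first by rewrite (cardsD1 v B) vB in cardB.
    by apply: disjointWr disjEB; apply: subD1set.
  by move=> u; rewrite inE => /andP[_ /nbE].
have marg : g (E :|: B) - g (E :|: (B :\ v)) <= g (v |: nb v) - g (nb v).
  have -> : E :|: (B :\ v) = (E :|: B) :\ v.
    by apply/setP => x; rewrite !inE; case: (x =P v) => [-> | _]; rewrite ?(negbTE vE).
  have {2}-> : nb v = (v |: nb v) :\ v by rewrite setU1K.
  apply: submodular_marginal; first exact: setU11.
  by rewrite subUset sub1set inE vB orbT (subset_trans nbvE) ?subsetUl.
rewrite (big_setD1 v vB) /=; lra.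
Qed.

Hypotheses (g0 : g set0 = 0) (g_mono : {homo g : X Y / X \subset Y >-> X <= Y}).

Lemma submodular_ge0 X : 0 <= g X.
Proof. by rewrite -g0 g_mono ?sub0set. Qed.

Lemma shearer (J : finType) (k : nat) (w : J -> nat) (A : J -> {set I}) (E : {set I}) :
  (forall j, (0 < w j)%N -> A j \subset E) ->
  (forall e, e \in E -> (k <= \sum_(j | e \in A j) w j)%N) ->
  k%:R * g E <= \sum_j (w j)%:R * g (A j).
Proof.
elim: {E}_.+1 {-2}E (ltnSn #|E|) A => // n IH E; rewrite ltnS => cardE A AE cover.
have [-> | [e eE]] := set_0Vmem E.
  by rewrite g0 mulr0 sumr_ge0 // => j _; rewrite mulr_ge0 ?submodular_ge0.
have IHe : k%:R * g (E :\ e) <= \sum_j (w j)%:R * g (A j :\ e).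
  apply: IH; first by rewrite (cardsD1 e E) eE in cardE.
    by move=> j /AE AjE; apply: setSD.
  move=> x; rewrite !inE => /andP[xe xE]; rewrite (eq_bigl (fun j => x \in A j)) ?cover //.
  by move=> j; rewrite !inE xe.
have step j : (w j)%:R * g (A j :\ e) + ((e \in A j) * w j)%:R * (g E - g (E :\ e))
              <= (w j)%:R * g (A j).
  have [-> | w_gt0] := posnP (w j); first by rewrite muln0 !mul0r addr0.
  case eA: (e \in A j); last first.
    by rewrite mul0n mul0r addr0 (setDidPl _) // disjoint_sym disjoints1 eA.
  rewrite mul1n -mulrDr ler_wpM2l //.
  by have := submodular_marginal eA (AE j w_gt0); lra.
apply: le_trans (ler_sum _ (fun j _ => step j)); rewrite big_split /= -mulr_suml.
have cover_e : k%:R <= \sum_j ((e \in A j) * w j)%:R :> R.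
  rewrite -natr_sum ler_nat; apply: leq_trans (cover e eE) _.
  by rewrite big_mkcond; apply: leq_sum => j _; case: (e \in A j); rewrite ?mul1n.
have marg_ge0 : 0 <= g E - g (E :\ e) by rewrite subr_ge0 g_mono ?subD1set.
have := ler_wpM2r marg_ge0 cover_e; lra.
Qed.

End SubmodularFunctions.

Section Entropy.
Variables (R : realType) (I H : finType) (Fam : {set {ffun I -> H}}).
Implicit Types (W X Y N : {set I}) (F : {ffun I -> H}).

Local Notation card_fam := (#|Fam|%:R : R).
Local Notation cnt W F := ((fiber_card Fam (restr W) F)%:R : R).

(* [#|Fam|] times the Shannon entropy, in nats, of [F|_W] for [F] uniform on [Fam]. *)
Definition entropy W : R := \sum_(F in Fam) ln (card_fam / cnt W F).

Lemma cnt_gt0 W F : F \in Fam -> 0 < cnt W F.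
Proof. exact: natr_fiber_card_gt0. Qed.

Lemma entropyE W : entropy W = card_fam * ln card_fam - \sum_(F in Fam) ln (cnt W F).
Proof.
rewrite /entropy (eq_bigr (fun F => ln card_fam - ln (cnt W F))).
  by rewrite sumrB sumr_const mulr_natl.
move=> F FF; have card_gt0 : 0 < card_fam by rewrite ltr0n; apply/card_gt0P; exists F.
by rewrite ln_div ?posrE ?cnt_gt0.
Qed.

Lemma entropy_set0 : entropy set0 = 0.
Proof.
rewrite entropyE (eq_bigr (fun=> ln card_fam)) ?sumr_const ?mulr_natl ?subrr // => F _.
suff -> : fiber_card Fam (restr set0) F = #|Fam| by [].
by apply: eq_card => F'; rewrite !inE restr_set0 andbT.
Qed.

Lemma entropy_setT : entropy setT = card_fam * ln card_fam.
Proof.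
rewrite entropyE big1 ?subr0 // => F FF.
suff -> : fiber_card Fam (restr setT) F = 1%N by rewrite ln1.
rewrite -(cards1 F); apply: eq_card => F'.
by rewrite !inE restr_setT; case: (F' =P F) => [-> | _]; rewrite ?FF ?andbF.
Qed.

Lemma entropy_mono : {homo entropy : X Y / X \subset Y >-> X <= Y}.
Proof.
move=> X Y XY; rewrite !entropyE lerD2l lerN2; apply: ler_sum => F FF.
rewrite ler_ln ?posrE ?cnt_gt0 // ler_nat; apply: subset_leq_card.
by apply/subsetP => F'; rewrite !inE => /andP[-> /(restr_subset XY)].
Qed.

Lemma sum_inv_cnt_agree2_le X Y F1 F2 : F1 \in Fam ->
  \sum_(F in Fam | (restr X F == restr X F1) && (restr Y F == restr Y F2))
     (cnt (X :|: Y) F * cnt (X :&: Y) F)^-1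
  <= (restr (X :&: Y) F2 == restr (X :&: Y) F1)%:R / cnt (X :&: Y) F1.
Proof.
move=> F1F; set T := [set F in Fam | (restr X F == restr X F1) && (restr Y F == restr Y F2)].
rewrite (eq_bigl (fun F => F \in T)); last by move=> F; rewrite inE.
have [-> | [F0 F0T]] := set_0Vmem T.
  by rewrite big_set0 divr_ge0.
have agreeT F : F \in T -> restr (X :&: Y) F == restr (X :&: Y) F1.
  rewrite inE => /andP[_ /andP[/(restr_subset (subsetIl X Y)) /eqP -> _]].
  by [].
have cntT F : F \in T -> cnt (X :|: Y) F = #|T|%:R.
  rewrite inE => /andP[_ /andP[/eqP eqX /eqP eqY]]; congr _%:R; apply: eq_card => F'.
  by rewrite !inE restr_setU eqX eqY.
have -> : restr (X :&: Y) F2 == restr (X :&: Y) F1.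
  move: F0T (agreeT F0 F0T); rewrite inE => /andP[_ /andP[_ eqY]] /eqP <-.
  by rewrite eq_sym (restr_subset (subsetIr X Y) eqY).
rewrite (eq_bigr (fun=> (#|T|%:R * cnt (X :&: Y) F1)^-1)); last first.
  by move=> F FT; rewrite cntT // (fiber_card_eq _ (eqP (agreeT F FT))).
rewrite sumr_const -[_ *+ _]mulr_natl invfM mulrA divff ?mul1r //.
by rewrite pnatr_eq0 -lt0n; apply/card_gt0P; exists F0.
Qed.

Lemma entropy_submod : submodular entropy.
Proof.
move=> X Y; rewrite !entropyE.
suff : \sum_(F in Fam) ln (cnt X F * cnt Y F) <=
       \sum_(F in Fam) ln (cnt (X :|: Y) F * cnt (X :&: Y) F).
  by rewrite !(sum_lnM (cnt_gt0 _) (cnt_gt0 _)); lra.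
apply: gibbs => [F FF | F FF | ]; rewrite ?mulr_gt0 ?cnt_gt0 //.
apply: le_trans (_ : \sum_(F1 in Fam) \sum_(F2 in Fam)
    (restr (X :&: Y) F2 == restr (X :&: Y) F1)%:R / cnt (X :&: Y) F1 <= _).
  rewrite (eq_bigr (fun F => \sum_(F1 in Fam) \sum_(F2 in Fam)
      (restr X F1 == restr X F)%:R * (restr Y F2 == restr Y F)%:R
      * (cnt (X :|: Y) F * cnt (X :&: Y) F)^-1)); last first.
    move=> F _; rewrite !natr_fiber_cardE -mulrA mulr_suml; apply: eq_bigr => F1 _.
    by rewrite mulr_suml mulr_sumr; apply: eq_bigr => F2 _; rewrite mulrA.
  rewrite exchange_big; apply: ler_sum => F1 F1F /=.
  rewrite exchange_big; apply: ler_sum => F2 _ /=.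
  apply: le_trans (sum_inv_cnt_agree2_le X Y F2 F1F).
  rewrite big_mkcondr /=; apply: ler_sum => F _.
  by rewrite !(eq_sym (restr _ F)); do 2 case: (_ == _); rewrite ?mul1r ?mul0r.
rewrite -sum1_card natr_sum; apply: ler_sum => F1 F1F.
by rewrite -mulr_suml -natr_fiber_cardE divff // gt_eqF ?cnt_gt0.
Qed.

Lemma entropy_setU1_sub_le N v (A : {ffun I -> H} -> {set H}) :
  {in Fam &, forall F1 F2, restr N F1 == restr N F2 -> A F1 = A F2} ->
  (forall F, F \in Fam -> F v \in A F) ->
  entropy (v |: N) - entropy N <= \sum_(F in Fam) ln #|A F|%:R.
Proof.
move=> A_restr vA.
have A_gt0 F : F \in Fam -> 0 < #|A F|%:R :> R.
  by move=> FF; rewrite ltr0n; apply/card_gt0P; exists (F v); apply: vA.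
suff : \sum_(F in Fam) ln (cnt N F) <= \sum_(F in Fam) ln (cnt (v |: N) F * #|A F|%:R).
  by rewrite !entropyE (sum_lnM (cnt_gt0 _) A_gt0); lra.
apply: gibbs => [F FF | F FF | ]; rewrite ?mulr_gt0 ?cnt_gt0 ?A_gt0 //.
rewrite sum_fiber_card_mul -sum1_card natr_sum; apply: ler_sum => F1 F1F.
set A1 := [set F in Fam | restr N F == restr N F1].
rewrite (eq_big (fun F => F \in A1)
   (fun F => #|A F1|%:R^-1 * (fiber_card A1 (fun F' => F' v) F)%:R^-1)); first last.
- move=> F /andP[FF eqN].
  rewrite (A_restr F F1) // invfM mulrC; congr (_ * _^-1); congr _%:R.
  apply: eq_card => F'.
  rewrite !inE restr_setU restr_set1 (eqP eqN).
  by case: (F' \in Fam); case: (F' v == F v); case: (restr N F' =P _).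
- by move=> F; rewrite inE.
rewrite -mulr_sumr sum_inv_fiber_card ler_pdivrMl ?A_gt0 // mulr1 ler_nat cardE.
apply: uniq_leq_size; first exact: undup_uniq.
move=> h; rewrite mem_undup => /mapP[F]; rewrite mem_enum inE => /andP[FF eqN] ->.
by rewrite mem_enum -(A_restr F F1) // vA.
Qed.

Lemma entropy_set1_le u (K : {set H}) :
  (forall F, F \in Fam -> F u \in K) -> entropy [set u] <= card_fam * ln #|K|%:R.
Proof.
move=> uK; have := @entropy_setU1_sub_le set0 u (fun=> K) (fun _ _ _ _ _ => erefl) uK.
by rewrite setU0 entropy_set0 subr0 sumr_const mulr_natl.
Qed.

Section Partition.
Variables (N : {set I}) (T : eqType) (X : {ffun I -> H} -> T).
Variable b : {ffun I -> option H} -> T -> R.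
Hypothesis X_restr : {in Fam &, forall F1 F2, restr N F1 == restr N F2 -> X F1 = X F2}.
Hypothesis b_gt0 : forall F, F \in Fam -> 0 < b (restr N F) (X F).

Definition partition_sum (x : T) : R :=
  \sum_(psi <- undup [seq restr N F | F <- enum [set F in Fam | X F == x]]) b psi x.

Lemma partition_sumE x :
  partition_sum x = \sum_(F in [set F in Fam | X F == x])
                  b (restr N F) x / (fiber_card [set F in Fam | X F == x] (restr N) F)%:R.
Proof. by rewrite (sum_div_fiber_card _ _ (fun psi => b psi x)). Qed.

Lemma partition_sum_gt0 F : F \in Fam -> 0 < partition_sum (X F).
Proof.
move=> FF; rewrite partition_sumE; set A1 := [set F' in Fam | X F' == X F].
have term_gt0 F' : F' \in A1 -> 0 < b (restr N F') (X F) / (fiber_card A1 (restr N) F')%:R.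
  move=> F'A1; move: (F'A1); rewrite inE => /andP[F'F /eqP <-].
  by rewrite divr_gt0 ?b_gt0 ?natr_fiber_card_gt0.
have term_ge0 F' : F' \in A1 -> 0 <= b (restr N F') (X F) / (fiber_card A1 (restr N) F')%:R.
  by move/term_gt0/ltW.
rewrite lt_def sumr_ge0 // andbT psumr_neq0 //.
by apply/hasP; exists F; rewrite ?mem_index_enum //= term_gt0 // inE FF eqxx.
Qed.

Lemma entropy_partition_bound :
  entropy N + \sum_(F in Fam) ln (b (restr N F) (X F)) <=
  \sum_(F in Fam) ln (card_fam * partition_sum (X F) / (fiber_card Fam X F)%:R).
Proof.
have Z_gt0 := partition_sum_gt0.
have cX_gt0 F : F \in Fam -> 0 < (fiber_card Fam X F)%:R :> R by exact: natr_fiber_card_gt0.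
suff : \sum_(F in Fam) ln (b (restr N F) (X F) * (fiber_card Fam X F)%:R) <=
       \sum_(F in Fam) ln (partition_sum (X F) * cnt N F).
  rewrite entropyE (sum_lnM b_gt0 cX_gt0) (sum_lnM Z_gt0 (cnt_gt0 N)).
  rewrite [s in _ -> _ <= s](eq_bigr (fun F => ln card_fam + ln (partition_sum (X F))
                             - ln (fiber_card Fam X F)%:R)); last first.
    move=> F FF; have card_gt0 : 0 < card_fam by rewrite ltr0n; apply/card_gt0P; exists F.
    by rewrite ln_div ?lnM ?posrE ?mulr_gt0 ?Z_gt0 ?cX_gt0.
  by rewrite !big_split /= sumrN sumr_const mulr_natl; lra.
apply: gibbs => [F FF | F FF | ]; rewrite ?mulr_gt0 ?b_gt0 ?Z_gt0 ?cX_gt0 ?cnt_gt0 //.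
under eq_bigr do rewrite mulrAC mulrC.
rewrite sum_fiber_card_mul -sum1_card natr_sum; apply: ler_sum => F1 F1F.
set A1 := [set F in Fam | X F == X F1].
rewrite (eq_big (fun F => F \in A1)
   (fun F => (partition_sum (X F1))^-1 *
             (b (restr N F) (X F1) / (fiber_card A1 (restr N) F)%:R))); first last.
- move=> F /andP[FF /eqP eqX]; rewrite invfM eqX mulrCA; congr (_ * (_ * _^-1)).
  congr _%:R; apply: eq_card => F'; rewrite !inE.
  case F'F: (F' \in Fam) => //=; case eqN: (restr N F' == restr N F); rewrite ?andbF //=.
  by rewrite (X_restr F'F FF eqN) eqX eqxx.
- by move=> F; rewrite inE.
by rewrite -mulr_sumr -partition_sumE mulVf // gt_eqF ?Z_gt0.
Qed.

End Partition.
End Entropy.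

Lemma odd_absz_addpm1 (z s : int) : s = 1 \/ s = -1 -> odd (absz (z + s)) = ~~ odd (absz z).
Proof.
move=> s_pm1; have := modn2 (absz (z + s)); have := modn2 (absz z).
by case: (odd _); case: (odd _) => /= *; case: s_pm1 => s_eq; subst s; lia.
Qed.

Section Lattice.
Variable d : nat.
Implicit Types (u v : pt d) (i : 'I_d) (s : int).

Lemma sum_shift v i s : \sum_(j < d) shift v i s j = \sum_(j < d) v j + s.
Proof.
rewrite (bigD1 i) //= [in RHS](bigD1 i) //= ffunE eqxx -addrA [s + _]addrC addrA.
by congr (_ + _ + _); apply: eq_bigr => j /negbTE ji; rewrite ffunE ji.
Qed.

Lemma odd_pt_shift v i s : s = 1 \/ s = -1 -> odd_pt (shift v i s) = ~~ odd_pt v.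
Proof. by rewrite /odd_pt sum_shift; apply: odd_absz_addpm1. Qed.

Lemma odd_pt_nbrs u v : u \in nbrs v -> odd_pt u = ~~ odd_pt v.
Proof. by rewrite mem_cat => /orP[] /mapP[i _ ->]; apply: odd_pt_shift; [left | right]. Qed.

Lemma shiftK v i s : shift (shift v i s) i (- s) = v.
Proof. by apply/ffunP => j; rewrite !ffunE; case: eqP => // _; rewrite addrK. Qed.

Lemma nbrs_sym u v : u \in nbrs v -> v \in nbrs u.
Proof.
rewrite !mem_cat => /orP[] /mapP[i _ ->]; apply/orP; [right | left];
  apply/mapP; exists i; rewrite ?mem_enum //.
- by rewrite -{2}(opprK 1) shiftK.
- by rewrite shiftK.
Qed.

Lemma shift_inj v s : s != 0 -> injective (shift v ^~ s).
Proof.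
move=> s0 i j /ffunP /(_ i); rewrite !ffunE eqxx.
by case: eqP => // _ /eqP; rewrite -subr_eq0 addrAC subrr add0r (negbTE s0).
Qed.

Lemma nbrs_uniq v : uniq (nbrs v).
Proof.
rewrite cat_uniq !(map_inj_uniq (shift_inj _)) ?enum_uniq //= andbT.
apply/hasPn => w /mapP[i _ ->]; apply/negP => /mapP[j _] /ffunP /(_ i).
by rewrite !ffunE eqxx; case: eqP => [-> | _]; lia.
Qed.

Lemma size_nbrs v : size (nbrs v) = (2 * d)%N.
Proof. by rewrite size_cat !size_map -enumT size_enum_ord addnn mul2n. Qed.

End Lattice.

Lemma card_fset_sub_mem (T : choiceType) (S : {fset T}) (s : seq T) :
  uniq s -> #|[set v : S | val v \in s]| = count [in S] s.
Proof.
move=> s_uniq; rewrite cardE -(size_map val) -size_filter; apply: perm_size.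
apply: uniq_perm; first by rewrite (map_inj_uniq val_inj) enum_uniq.
  exact: filter_uniq.
move=> x; rewrite mem_filter; apply/mapP/andP => [[v] | [xS xs]].
  by rewrite mem_enum inE => vs ->; split => //; apply: fsvalP.
by exists (FSetSub xS); rewrite // mem_enum inE.
Qed.

Section Region.
Variables (d : nat) (S : {fset pt d}).

Definition nbr_set (v : S) : {set S} := [set u : S | val u \in nbrs (val v)].

Lemma ibd_nout_gt0 (u : S) : ibd S (val u) = (0 < nout S (val u))%N.
Proof. by rewrite /ibd /nout fsvalP -has_count. Qed.

Lemma card_nbr_set_add_nout (e : S) : (#|nbr_set e| + nout S (val e))%N = (2 * d)%N.
Proof. by rewrite card_fset_sub_mem ?nbrs_uniq // count_predC size_nbrs. Qed.

Lemma submodular_lattice_bound (R : realFieldType) (g : {set S} -> R) :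
  g set0 = 0 -> {homo g : X Y / X \subset Y >-> X <= Y} -> submodular g -> even_set S ->
  (2 * d)%:R * g setT <=
  \sum_(v : S | odd_pt (val v))
     ((2 * d)%:R * (g (v |: nbr_set v) - g (nbr_set v)) + g (nbr_set v))
  + \sum_(u : S | ibd S (val u)) (nout S (val u))%:R * g [set u].
Proof.
move=> g0 g_mono g_submod even_S.
set Ev := [set u : S | ~~ odd_pt (val u)].
have nbr_even v : odd_pt (val v) -> nbr_set v \subset Ev.
  by move=> ov; apply/subsetP => u; rewrite !inE => /odd_pt_nbrs ->; rewrite ov.
have chain : g setT <= g Ev + \sum_(v : S | odd_pt (val v)) (g (v |: nbr_set v) - g (nbr_set v)).
  have -> : setT = Ev :|: [set v : S | odd_pt (val v)].
    by apply/setP => u; rewrite !inE orNb.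
  rewrite (eq_bigl (fun v => v \in [set v : S | odd_pt (val v)])); last by move=> v; rewrite inE.
  apply: submodular_chain => // [|v]; last by rewrite inE; apply: nbr_even.
  by rewrite disjoints_subset; apply/subsetP => u; rewrite !inE.
pose w (j : S + S) := match j with inl v => nat_of_bool (odd_pt (val v))
                                   | inr u => nout S (val u) end.
pose A (j : S + S) := match j with inl v => nbr_set v | inr u => [set u] end.
have shear : (2 * d)%:R * g Ev <= \sum_j (w j)%:R * g (A j).
  apply: shearer => // [[v | u] /= w_gt0 | e].
  - by apply: nbr_even; move: w_gt0; case: odd_pt.
  - by rewrite sub1set inE; apply: even_S; rewrite ibd_nout_gt0.
  rewrite inE => e_even; rewrite big_sumType /= [s in (_ + s)%N](big_pred1 e); last first.
    by move=> u; rewrite inE eq_sym.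
  rewrite -(card_nbr_set_add_nout e) leq_add2r -sum1_card; apply: eq_leq.
  apply: eq_big => v; first by rewrite !inE; apply/idP/idP => /nbrs_sym.
  by rewrite inE => /odd_pt_nbrs ->; rewrite (negbTE e_even).
rewrite big_sumType /= in shear.
have odd_part : \sum_v (odd_pt (val v) : nat)%:R * g (nbr_set v) =
                \sum_(v : S | odd_pt (val v)) g (nbr_set v).
  by rewrite [RHS]big_mkcond; apply: eq_bigr => v _; case: odd_pt; rewrite ?mul1r ?mul0r.
have bd_part : \sum_u (nout S (val u))%:R * g [set u] =
               \sum_(u : S | ibd S (val u)) (nout S (val u))%:R * g [set u].
  rewrite [RHS]big_mkcond; apply: eq_bigr => u _; rewrite ibd_nout_gt0.
  by case: posnP => [-> | //]; rewrite mul0r.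
have := ler_wpM2l (ler0n R (2 * d)) chain; rewrite mulrDr mulr_sumr.
by rewrite big_split /=; move: shear; rewrite odd_part bd_part; lra.
Qed.
End Region.

Lemma prob_supp_gt0 (R : realType) d (H : finType) (S : {fset pt d})
  (Fam : {set {ffun S -> H}}) (T : eqType) (X : {ffun S -> H} -> T) x :
  x \in supp Fam X -> 0 < prob R Fam X x.
Proof.
rewrite mem_undup => /mapP[F]; rewrite mem_enum => FF ->.
by rewrite divr_gt0 // ltr0n; apply/card_gt0P; exists F; rewrite // inE FF eqxx.
Qed.

Lemma prod_powR (R : realType) (I : eqType) (s : seq I) (P : pred I) (a e : I -> R) :
  (forall i, i \in s -> P i -> 0 < a i) ->
  \prod_(i <- s | P i) a i `^ e i = expR (\sum_(i <- s | P i) e i * ln (a i)).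
Proof.
move=> a_gt0; rewrite expR_sum big_seq_cond [RHS]big_seq_cond.
by apply: eq_bigr => i /andP[si Pi]; rewrite /powR gt_eqF ?a_gt0.
Qed.

Lemma sum_div_mulr (R : fieldType) (I : Type) (s : seq I) (P : pred I) (a b : I -> R) k :
  \sum_(i <- s | P i) a i / k * b i = (\sum_(i <- s | P i) a i * b i) / k.
Proof. by rewrite mulr_suml; apply: eq_bigr => i _; rewrite mulrAC. Qed.

Section OddSite.
Variables (R : realType) (d : nat) (H : finType) (Hc : pt d -> pt d -> {set H * H}).
Variables (S : {fset pt d}) (Fam : {set {ffun S -> H}}).
Variables (v : S) (T : eqType) (Xv : {ffun S -> H} -> T).
Hypothesis Fam_hom : forall F, F \in Fam -> is_hom Hc F.
Hypothesis v_odd : odd_pt (val v).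
Hypothesis Xv_restrN : forall F1 F2, F1 \in Fam -> F2 \in Fam ->
  restrN (val v) F1 = restrN (val v) F2 -> Xv F1 = Xv F2.

Local Notation N := (nbr_set v).
Local Notation site_set psi x := (Hvpsi Hc (val v) psi :&: Ivx Fam Xv v x).
Local Notation weight := (fun psi x => (#|site_set psi x| ^ (2 * d))%:R : R).
Local Notation Zvx x := (Zv R Hc (val v) (Psi Fam Xv (val v) x) (Ivx Fam Xv v x)).

Lemma restrN_restr (F : {ffun S -> H}) : restrN (val v) F = restr N F.
Proof. by apply/ffunP => u; rewrite !ffunE inE. Qed.

Lemma Xv_restr : {in Fam &, forall F1 F2, restr N F1 == restr N F2 -> Xv F1 = Xv F2}.
Proof. by move=> F1 F2 F1F F2F /eqP eqN; apply: Xv_restrN; rewrite ?restrN_restr. Qed.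

Lemma mem_site_set F : F \in Fam -> F v \in site_set (restr N F) (Xv F).
Proof.
move=> FF; rewrite inE; apply/andP; split; last first.
  by apply/imsetP; exists F; rewrite // inE FF eqxx.
rewrite inE; apply/forallP => u; rewrite ffunE inE.
by case: ifP => // uN; apply: Fam_hom.
Qed.

Lemma Zv_partition x : Zvx x = partition_sum Fam N Xv weight x.
Proof. by rewrite /Zv /Psi (eq_map restrN_restr). Qed.

Lemma sum_ln_prob (Z : T -> R) :
  \sum_(F in Fam) ln (#|Fam|%:R * Z (Xv F) / (fiber_card Fam Xv F)%:R) =
  #|Fam|%:R * \sum_(x <- supp Fam Xv) prob R Fam Xv x * ln (Z x / prob R Fam Xv x).
Proof.
pose G x := #|event Fam Xv x|%:R * ln (#|Fam|%:R * Z x / #|event Fam Xv x|%:R).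
rewrite (eq_bigr (fun F => G (Xv F) / (fiber_card Fam Xv F)%:R)); last first.
  move=> F FF; rewrite /G /event -/(fiber_card Fam Xv F) [RHS]mulrAC divff ?mul1r //.
  by rewrite gt_eqF ?natr_fiber_card_gt0.
rewrite sum_div_fiber_card mulr_sumr big_seq [RHS]big_seq; apply: eq_bigr => x.
rewrite mem_undup => /mapP[F]; rewrite mem_enum => FF _.
have card_neq0 : #|Fam|%:R != 0 :> R by rewrite pnatr_eq0 -lt0n; apply/card_gt0P; exists F.
by rewrite /G /prob invf_div mulrA [_ * (_ / _)]mulrC divfK // mulrA [Z x * _]mulrC.
Qed.

Lemma weight_gt0 F : F \in Fam -> 0 < weight (restr N F) (Xv F).
Proof.
by move=> FF; rewrite ltr0n expn_gt0; apply/orP; left; apply/card_gt0P; exists (F v);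
  apply: mem_site_set.
Qed.

Lemma Zv_div_prob_gt0 x : x \in supp Fam Xv -> 0 < Zvx x / prob R Fam Xv x.
Proof.
move=> xs; rewrite divr_gt0 ?prob_supp_gt0 //.
move: xs; rewrite mem_undup => /mapP[F]; rewrite mem_enum => FF ->.
by rewrite Zv_partition partition_sum_gt0 //; apply: weight_gt0.
Qed.

Lemma entropy_odd_site_le :
  (2 * d)%:R * (entropy R Fam (v |: N) - entropy R Fam N) + entropy R Fam N <=
  #|Fam|%:R * \sum_(x <- supp Fam Xv) prob R Fam Xv x * ln (Zvx x / prob R Fam Xv x).
Proof.
have site_gt0 F : F \in Fam -> 0 < #|site_set (restr N F) (Xv F)|%:R :> R.
  by move=> FF; rewrite ltr0n; apply/card_gt0P; exists (F v); apply: mem_site_set.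
have site_restr : {in Fam &, forall F1 F2, restr N F1 == restr N F2 ->
    site_set (restr N F1) (Xv F1) = site_set (restr N F2) (Xv F2)}.
  by move=> F1 F2 F1F F2F eqN; rewrite (eqP eqN) (Xv_restr F1F F2F eqN).
have := ler_wpM2l (ler0n R (2 * d)) (@entropy_setU1_sub_le R _ _ Fam N v
  (fun F => site_set (restr N F) (Xv F)) site_restr mem_site_set).
have := @entropy_partition_bound R _ _ Fam N T Xv weight Xv_restr weight_gt0.
rewrite (eq_bigr (fun F => (2 * d)%:R * ln #|site_set (restr N F) (Xv F)|%:R)); last first.
  by move=> F FF; rewrite natrX lnXn ?site_gt0 // mulr_natl.
move=> part cond; under eq_bigr do rewrite Zv_partition.
by rewrite -sum_ln_prob; move: cond; rewrite mulr_sumr; lra.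
Qed.

End OddSite.

Section CountingBound.
Variables (R : realType) (d : nat) (H : finType) (Hc : pt d -> pt d -> {set H * H}).
Variables (S : {fset pt d}) (Hu : pt d -> {set H}) (Fam : {set {ffun S -> H}}).
Variables (T : S -> eqType) (X : forall v : S, {ffun S -> H} -> T v).
Hypothesis d_gt0 : (0 < d)%N.
Hypothesis S_even : even_set S.
Hypothesis Fam_hom : forall F, F \in Fam -> is_hom Hc F.
Hypothesis Fam_Hu : forall F, F \in Fam -> forall u : S, ibd S (val u) -> F u \in Hu (val u).
Hypothesis X_restrN : forall v : S, odd_pt (val v) -> forall F1 F2, F1 \in Fam -> F2 \in Fam ->
  restrN (val v) F1 = restrN (val v) F2 -> X v F1 = X v F2.

Lemma ln_card_le : (0 < #|Fam|)%N ->
  ln (#|Fam|%:R : R) <=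
    \sum_(v : S | odd_pt (val v)) \sum_(x <- supp Fam (X v))
       prob R Fam (X v) x / (2 * d)%:R *
       ln (Zv R Hc (val v) (Psi Fam (X v) (val v) x) (Ivx Fam (X v) v x) / prob R Fam (X v) x)
  + \sum_(u : S | ibd S (val u)) (nout S (val u))%:R / (2 * d)%:R * ln #|Hu (val u)|%:R.
Proof.
move=> Fam_gt0; have k_gt0 : 0 < (2 * d)%:R :> R by rewrite ltr0n muln_gt0.
have N_gt0 : 0 < #|Fam|%:R :> R by rewrite ltr0n.
have := submodular_lattice_bound (entropy_set0 R Fam) (@entropy_mono R _ _ Fam)
  (@entropy_submod R _ _ Fam) S_even.
rewrite entropy_setT => lattice.
under eq_bigr do rewrite sum_div_mulr.
rewrite -mulr_suml sum_div_mulr -mulrDl ler_pdivlMr // [ln _ * _]mulrC -(ler_pM2l N_gt0) mulrCA.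
apply: le_trans lattice _; rewrite mulrDr !mulr_sumr; apply: lerD; apply: ler_sum.
  by move=> v v_odd; apply: entropy_odd_site_le Fam_hom v_odd (X_restrN v_odd).
move=> u u_bd; rewrite mulrCA ler_wpM2l // entropy_set1_le // => F FF; exact: Fam_Hu.
Qed.
End CountingBound.

Theorem lemma7p4 (R : realType) (d : nat) (H : finType)
  (Hc : pt d -> pt d -> {set H * H})
  (S : {fset pt d}) (Hu : pt d -> {set H})
  (Fam : {set {ffun S -> H}})
  (T : S -> eqType) (X : forall v : S, {ffun S -> H} -> T v) :
  (0 < d)%N ->
  (forall v u : pt d, u \in nbrs v -> Hc v u = Hc u v) ->
  even_set S ->
  (forall F, F \in Fam -> is_hom Hc F) ->
  (forall F, F \in Fam -> forall u : S, ibd S (val u) -> F u \in Hu (val u)) ->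
  (forall v : S, odd_pt (val v) -> forall F1 F2, F1 \in Fam -> F2 \in Fam ->
     restrN (val v) F1 = restrN (val v) F2 -> X v F1 = X v F2) ->
  (#|Fam|%:R : R) <=
    (\prod_(v : S | odd_pt (val v))
       \prod_(x <- supp Fam (X v))
         (Zv R Hc (val v) (Psi Fam (X v) (val v) x) (Ivx Fam (X v) v x)
            / prob R Fam (X v) x)
         `^ (prob R Fam (X v) x / (2 * d)%:R))
    * \prod_(u : S | ibd S (val u))
        (#|Hu (val u)|%:R) `^ ((nout S (val u))%:R / (2 * d)%:R).
Proof.
move=> d_gt0 _ S_even Fam_hom Fam_Hu X_restrN.
have [-> | [F0 F0F]] := set_0Vmem Fam.
  by rewrite cards0 mulr_ge0 // prodr_ge0 // => *; rewrite ?prodr_ge0 // => *; apply: powR_ge0.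
have Fam_gt0 : (0 < #|Fam|)%N by apply/card_gt0P; exists F0.
rewrite (eq_bigr _ (fun v (v_odd : odd_pt (val v)) =>
          prod_powR _ (fun x xs _ => Zv_div_prob_gt0 R Fam_hom v_odd xs))).
rewrite -expR_sum prod_powR => [|u _ u_bd]; last first.
  by rewrite ltr0n; apply/card_gt0P; exists (F0 u); apply: Fam_Hu.
rewrite -expRD -[X in X <= _]lnK ?posrE ?ltr0n // ler_expR.
exact: ln_card_le.
Qed.
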